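(* For every integer $n\ge 2$, $$F(D_n)=\tau(n)+\pi(n-1)-\pi\!\left(\tfrac n2\right)+\gamma_{n/2}(n).$$ In particular, if $n$ is prime, $F(D_n)=\pi(n)-\pi\!\left(\tfrac n2\right)+1$.
   Context: $D_n$ is the graph with vertex set $\{1,\dots,n\}$ in which distinct $a,b$ are adjacent iff $\gcd(a,b)\mid n$ (the maximal Diophantine graph of order $n$). $F(G)$ is the number of vertices of degree $n-1$ in a graph $G$ of order $n$. $\pi(x)$ is the number of primes $\le x$, $\tau(n)$ the number of positive divisors of $n$. For a prime $p$, $\acute v_p(n):=v_p(n)+1$, where $v_p$ is the $p$-adic valuation. For a real $0<x<n$, $\gamma_x(n):=\left|\{p^{\acute v_p(n)} : p \text{ prime},\ p\mid n,\ x<p^{\acute v_p(n)}<n\}\right|$. *)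

From mathcomp Require Import all_boot all_order all_algebra.
Set Implicit Arguments. Unset Strict Implicit. Unset Printing Implicit Defensive.
Import Order.TTheory GRing.Theory Num.Theory.

Definition Dadj (n a b : nat) : bool := (a != b) && (gcdn a b %| n).

Definition Dverts (n : nat) : seq nat := iota 1 n.

Definition Ddeg (n a : nat) : nat := count (Dadj n a) (Dverts n).

Definition F_D (n : nat) : nat := count (fun a => Ddeg n a == n.-1) (Dverts n).

Definition primepi (x : nat) : nat := count prime (iota 0 x.+1).

Definition tau (n : nat) : nat := size (divisors n).

Definition vacute (p n : nat) : nat := (logn p n).+1.

(* gamma_x(n) for real (here rational) 0 < x < n:
   number of distinct values p^(v'_p(n)), p prime, p | n, x < p^(v'_p(n)) < n *)
Definition gamma (x : rat) (n : nat) : nat :=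
  size (undup [seq p ^ vacute p n | p <- primes n &
                 (x < ((p ^ vacute p n)%:R : rat))%R && (p ^ vacute p n < n)]).

From mathcomp Require Import all_boot all_order all_algebra zify.
Import GRing.Theory Num.Theory.
Set Implicit Arguments. Unset Strict Implicit.

(* A vertex a of D_n is universal iff a | n, or a = p^(v_p(n)+1) for a prime p
   with n < 2a.  If a does not divide n, some q = p^(v_p(n)+1) divides a; the
   neighbours q and 2a of a then force q = a and n < 2a.  Conversely, for such
   an a every gcd(a, b) is a power p^j, and j = v_p(n)+1 would make b a proper
   multiple of a, hence b >= 2a > n.  When p does not divide n, a = p is a prime
   in (n/2, n), counted by pi(n-1) - pi(n/2); when p | n, a is one of the powers
   counted by gamma_{n/2}(n); the divisors of n account for tau(n). *)

Lemma count_add3 (T : eqType) (s : seq T) (a b c d : pred T) :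
  {in s, forall x, a x = b x + c x + d x :> nat} ->
  count a s = count b s + count c s + count d s.
Proof.
elim: s => //= x s IHs eq_abcd.
rewrite eq_abcd ?mem_head // IHs => [|y s_y]; first lia.
by rewrite eq_abcd // inE s_y orbT.
Qed.

Lemma count_mem_uniq_sub (T : eqType) (s t : seq T) :
  uniq s -> uniq t -> {subset t <= s} -> count (mem t) s = size t.
Proof.
move=> s_uniq t_uniq sub_ts; rewrite -size_filter; apply/perm_size/uniq_perm => //.
  exact: filter_uniq.
by move=> x; rewrite mem_filter andb_idr //; apply: sub_ts.
Qed.

Lemma half_ltn n a : (n./2 < a) = (n < a.*2).
Proof. by rewrite -[in RHS](odd_double_half n); case: (odd n) => /=; lia. Qed.

Lemma primepiS n : primepi n.+1 = primepi n + prime n.+1.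
Proof. by rewrite /primepi -addn1 iotaD count_cat /= addn0. Qed.

Lemma tau_prime p : prime p -> tau p = 2.
Proof.
move=> p_pr; have p_gt1 := prime_gt1 p_pr.
rewrite /tau (@perm_size _ _ [:: 1; p]) //; apply: uniq_perm.
- exact: divisors_uniq.
- by rewrite /= inE neq_ltn p_gt1.
move=> d; rewrite -dvdn_divisors ?prime_gt0 // !inE.
have [->|d_neq1] := eqVneq d 1; first by rewrite dvd1n.
by apply/idP/eqP => [/(prime_nt_dvdP p_pr d_neq1)|->].
Qed.

Section UniversalVertices.

Variable n : nat.

Definition universal a := all (fun b => (b == a) || (gcdn a b %| n)) (Dverts n).

Lemma Ddeg_universal a : a \in Dverts n -> (Ddeg n a == n.-1) = universal a.
Proof.
move=> a_vert; rewrite /Ddeg /universal.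
have -> : count (Dadj n a) (Dverts n) =
          count (fun b => gcdn a b %| n) [seq b <- Dverts n | b != a].
  by rewrite count_filter; apply: eq_count => b; rewrite /Dadj /= andbC eq_sym.
have -> : n.-1 = size [seq b <- Dverts n | b != a].
  have := count_predC (pred1 a) (Dverts n).
  rewrite size_filter count_uniq_mem ?iota_uniq // a_vert size_iota.
  by rewrite (@eq_count _ _ (fun b => b != a)) // add1n => n_eq; rewrite -[in LHS]n_eq.
rewrite -all_count all_filter; apply: eq_all => b /=.
by rewrite implybE negbK.
Qed.

Lemma universal_dvd a : a %| n -> universal a.
Proof. by move=> a_dvd; apply/allP => b _; rewrite (dvdn_trans (dvdn_gcdl a b)) ?orbT. Qed.

Lemma universal_pfactor p :
  prime p -> n < (p ^ (logn p n).+1).*2 -> universal (p ^ (logn p n).+1).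
Proof.
set a := p ^ _ => p_pr n_lt; apply/allP => b; rewrite mem_iota => /andP[b_gt0 b_le].
have n_gt0 : 0 < n by lia.
have [//|b_neq_a /=] := eqVneq b a.
have [j j_le g_eq] : exists2 j, j <= (logn p n).+1 & gcdn a b = p ^ j.
  by apply/dvdn_pfactor => //; apply: dvdn_gcdl.
rewrite g_eq pfactor_dvdn // -ltnS ltn_neqAle j_le andbT.
apply: contraTneq n_lt => j_eq.
have /dvdnP[k b_eq] : a %| b by rewrite /a -j_eq -g_eq dvdn_gcdr.
have k_gt1 : 1 < k.
  by move: b_gt0 b_neq_a; rewrite b_eq; case: k {b_eq} => [|[|k]]; rewrite ?mul1n ?eqxx.
have : a.*2 <= b by rewrite b_eq -mul2n leq_mul2r k_gt1 orbT.
lia.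
Qed.

Lemma universal_ndvd_pfactor a : a \in Dverts n -> ~~ (a %| n) -> universal a ->
  exists2 p, prime p & a = p ^ (logn p n).+1 /\ n < a.*2.
Proof.
rewrite mem_iota => /andP[a_gt0 a_le] a_ndvd /allP a_univ.
have gcd_dvd b : 0 < b <= n -> b != a -> gcdn a b %| n.
  by move=> b_range b_neq; move: (a_univ b); rewrite mem_iota (negbTE b_neq); apply; lia.
have [p a_p p_ndvd] : exists2 p, p \in primes a & ~~ (a`_p %| n).
  apply/hasP; apply: contraR a_ndvd => /hasPn p_dvd.
  by apply/dvdn_partP => // p /p_dvd; rewrite negbK.
have p_pr : prime p by move: a_p; rewrite mem_primes => /andP[].
have n_gt0 : 0 < n by lia.
set q := p ^ (logn p n).+1.
have q_dvd_a : q %| a by rewrite pfactor_dvdn // ltnNge -pfactor_dvdn // -p_part.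
have q_ndvd_n : ~~ (q %| n) by rewrite pfactor_dvdn // ltnn.
have a_eq : a = q.
  apply/eqP; rewrite eq_sym; apply: contraR q_ndvd_n => q_neq.
  rewrite -(gcdn_idPr q_dvd_a) gcd_dvd //.
  by rewrite expn_gt0 prime_gt0 //= (leq_trans (dvdn_leq _ q_dvd_a)).
exists p => //; split=> //; rewrite ltnNge; apply: contra a_ndvd => a2_le.
have a_dvd_a2 : a %| a.*2 by rewrite -muln2 dvdn_mulr.
by rewrite -{1}(gcdn_idPl a_dvd_a2) gcd_dvd; lia.
Qed.

Definition upper_prime a := prime a && (n./2 < a) && (a < n).

Definition gamma_seq :=
  undup [seq p ^ vacute p n | p <- primes n &
           ((n%:R / 2%:R : rat) < (p ^ vacute p n)%:R)%R && (p ^ vacute p n < n)].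

Lemma gamma_seqE : gamma (n%:R / 2%:R) n = size gamma_seq.
Proof. by []. Qed.

Lemma gamma_seqP a :
  reflect (exists2 p, p \in primes n & [/\ a = p ^ (logn p n).+1, n < a.*2 & a < n])
          (a \in gamma_seq).
Proof.
have half_ltr q : ((n%:R / 2%:R : rat) < q%:R)%R = (n < q.*2).
  by rewrite ltr_pdivrMr ?ltr0n // -natrM ltr_nat muln2.
rewrite mem_undup; apply: (iffP mapP) => [[p]|[p n_p [-> n_lt p_lt]]].
  by rewrite mem_filter half_ltr => /andP[/andP[? ?] ?] ->; exists p.
by exists p; rewrite // mem_filter half_ltr n_p /vacute n_lt p_lt.
Qed.

Lemma upper_prime_ndvd a : upper_prime a -> ~~ (a %| n).
Proof.
case/andP=> /andP[_]; rewrite half_ltn => n_lt a_lt; apply/negP => /dvdnP[k n_eq].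
by move: n_lt a_lt; rewrite n_eq; case: k {n_eq} => [|[|k]]; rewrite ?mul1n; lia.
Qed.

Lemma gamma_seq_ndvd a : a \in gamma_seq -> ~~ (a %| n).
Proof.
case/gamma_seqP=> p; rewrite mem_primes => /and3P[p_pr n_gt0 _] [-> _ _].
by rewrite pfactor_dvdn // ltnn.
Qed.

Lemma gamma_seq_nprime a : a \in gamma_seq -> ~~ prime a.
Proof.
case/gamma_seqP=> p n_p [-> _ _]; apply/negP => a_pr.
have p_pr : prime p by move: n_p; rewrite mem_primes => /andP[].
rewrite -logn_gt0 in n_p; have := logn_prime p a_pr.
by rewrite pfactorK //; case: (_ == _) => /eqP; lia.
Qed.

Lemma universal_upper_prime a : upper_prime a -> universal a.
Proof.
move=> a_up; have a_ndvd := upper_prime_ndvd a_up.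
case/andP: a_up => /andP[a_pr]; rewrite half_ltn => n_lt _.
have logn0 : logn a n = 0.
  by apply/eqP; rewrite -leqn0 leqNgt logn_gt0 mem_primes a_pr (negbTE a_ndvd) andbF.
by have := universal_pfactor a_pr; rewrite logn0 expn1; apply.
Qed.

Lemma universal_gamma_seq a : a \in gamma_seq -> universal a.
Proof.
case/gamma_seqP=> p; rewrite mem_primes => /andP[p_pr _] [-> n_lt _].
exact: universal_pfactor.
Qed.

Lemma universal_ndvd_cases a : a \in Dverts n -> ~~ (a %| n) -> universal a ->
  upper_prime a || (a \in gamma_seq).
Proof.
move=> a_vert a_ndvd /(universal_ndvd_pfactor a_vert a_ndvd)[p p_pr [a_eq n_lt]].
have a_lt : a < n.
  rewrite ltn_neqAle; apply/andP; split; first by apply: contraNneq a_ndvd => ->.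
  by move: a_vert; rewrite mem_iota; lia.
have [n_p|n_np] := boolP (p \in primes n).
  by apply/orP; right; apply/gamma_seqP; exists p.
have logn0 : logn p n = 0 by apply/eqP; rewrite -leqn0 leqNgt logn_gt0.
by rewrite a_eq logn0 expn1 /upper_prime p_pr half_ltn -(expn1 p) -logn0 -a_eq n_lt a_lt.
Qed.

Lemma universal_split a : a \in Dverts n ->
  universal a = (a %| n) + upper_prime a + (a \in gamma_seq) :> nat.
Proof.
move=> a_vert; have [a_dvd|a_ndvd] := boolP (a %| n).
  rewrite universal_dvd // (negbTE (contraL (@upper_prime_ndvd a) a_dvd)).
  by rewrite (negbTE (contraL (@gamma_seq_ndvd a) a_dvd)).
have [a_up|a_nup] := boolP (upper_prime a).
  have a_pr : prime a by case/andP: a_up => /andP[].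
  by rewrite universal_upper_prime // (negbTE (contraL (@gamma_seq_nprime a) a_pr)).
have [a_g|a_ng] := boolP (a \in gamma_seq); first by rewrite universal_gamma_seq.
case: (boolP (universal a)) => // a_univ.
by have := universal_ndvd_cases a_vert a_ndvd a_univ; rewrite (negbTE a_nup) (negbTE a_ng).
Qed.

Lemma count_dvdn_Dverts : 0 < n -> count (fun a => a %| n) (Dverts n) = tau n.
Proof.
move=> n_gt0; rewrite /tau -(count_mem_uniq_sub (iota_uniq 1 n) (divisors_uniq n)).
  by apply: eq_count => d; rewrite /= -dvdn_divisors.
move=> d; rewrite -dvdn_divisors // mem_iota => d_dvd.
by have := dvdn_leq n_gt0 d_dvd; have := dvdn_gt0 n_gt0 d_dvd; lia.
Qed.

Lemma count_gamma_seq : count (mem gamma_seq) (Dverts n) = size gamma_seq.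
Proof.
apply: count_mem_uniq_sub; rewrite ?iota_uniq ?undup_uniq // => a.
case/gamma_seqP=> p; rewrite mem_primes mem_iota => /andP[p_pr _] [-> _ a_lt].
by rewrite expn_gt0 prime_gt0 //=; lia.
Qed.

Lemma count_upper_prime :
  0 < n -> count upper_prime (Dverts n) + primepi n./2 = primepi n.-1.
Proof.
move=> n_gt0; set m := n./2; have m_lt : m < n by rewrite half_ltn; lia.
have verts_split : Dverts n = iota 1 m ++ iota m.+1 (n - m.+1) ++ [:: n].
  rewrite /Dverts -[in LHS](_ : m + ((n - m.+1) + 1) = n); last lia.
  by rewrite !iotaD /= add1n (_ : m.+1 + (n - m.+1) = n) //; lia.
have upper_primes_split : count upper_prime (Dverts n) = count prime (iota m.+1 (n - m.+1)).
  rewrite verts_split !count_cat /= /upper_prime ltnn andbF addn0.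
  rewrite (@eq_in_count _ _ pred0) ?count_pred0 => [|a]; last first.
    by rewrite mem_iota => a_range /=; rewrite ltnNge (_ : a <= m) ?andbF //; lia.
  rewrite add0n addn0; apply: eq_in_count => a; rewrite mem_iota -/m => a_range /=.
  have [m_lt_a a_lt_n] : m < a /\ a < n by lia.
  by rewrite m_lt_a a_lt_n !andbT.
by rewrite upper_primes_split /primepi prednK // -[in RHS](subnKC m_lt) iotaD count_cat addnC.
Qed.

Lemma F_D_count : 0 < n -> F_D n = tau n + count upper_prime (Dverts n) + size gamma_seq.
Proof.
move=> n_gt0; rewrite /F_D (eq_in_count (a2 := universal)) => [|a]; last exact: Ddeg_universal.
by rewrite (count_add3 universal_split) count_dvdn_Dverts // count_gamma_seq.
Qed.

Lemma gamma_seq_prime : prime n -> gamma_seq = [::].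
Proof.
move=> n_pr; rewrite /gamma_seq primes_prime //= /vacute logn_prime // eqxx.
by rewrite -[n ^ _]/(n * n) ltnNge leq_pmulr ?prime_gt0 ?andbF.
Qed.

End UniversalVertices.

Theorem mainTheorem6 :
  forall n : nat, 2 <= n ->
    ((F_D n)%:Z = (tau n)%:Z + (primepi n.-1)%:Z - (primepi n./2)%:Z
                  + (gamma ((n%:R / 2%:R)%R : rat) n)%:Z)%R /\
    (prime n -> ((F_D n)%:Z = (primepi n)%:Z - (primepi n./2)%:Z + 1)%R).
Proof.
move=> n n_ge2; have n_gt0 : 0 < n by lia.
have F_eq := F_D_count n_gt0; have upper_eq := count_upper_prime n_gt0.
rewrite gamma_seqE; split; first by lia.
move=> n_pr; have := primepiS n.-1; rewrite prednK // n_pr.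
by move: F_eq; rewrite tau_prime // gamma_seq_prime //=; lia.
Qed.
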